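(* Let $N, M \ge 1$ be integers, let the sites be indexed by $j \in \mathbb{Z}_M$ (indices taken cyclically, so site $M+1$ is site $1$), and let $\lambda \ge 0$. Let real numbers $d_{i j l}$, for $i \in \{1,\dots,N\}$ and $j,l \in \mathbb{Z}_M$, satisfy the additive property $d_{ijl} + d_{ilk} = d_{ijk}$ for all $i$ and all $j,l,k \in \mathbb{Z}_M$. Potts model: for a configuration $s = (s_1,\dots,s_M) \in \{1,\dots,N\}^{M}$ define $$H_s(s) = -\sum_{j \in \mathbb{Z}_M} d_{s_j\, j\, (j+1)} + \lambda\, \#\{ j \in \mathbb{Z}_M : s_j \neq s_{j+1}\}.$$ Ising (domain-wall) model: for a configuration $c = (c_1,\dots,c_M) \in \{0,1\}^M$, let $p_1 < p_2 < \dots < p_K$ be the sites with $c_{p}=1$, and define $$H_c(c) = -\sum_{k=1}^{K} J_{p_k\, p_{k+1}} + \lambda \sum_{j} c_j, \qquad p_{K+1} := p_1,$$ where $J_{jl} = \max_{i} d_{ijl}$ (the sum over $k$ is empty, hence $0$, when $K=0$). Then the ground state energies coincide: $\min_{s \in \{1,\dots,N\}^M} H_s(s) = \min_{c \in \{0,1\}^M} H_c(c)$.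
   Context: Interpretation (not needed for the statement): sites $j$ are sampled body shapes traversed cyclically in one gait cycle, the Potts spin value $s_j$ is the contact pattern used on the step from shape $j$ to shape $j+1$, $d_{ijl}$ is the forward displacement obtained by moving from shape $j$ to shape $l$ with contact pattern $i$, and $\lambda$ is a penalty per contact switch. A domain wall $c_{j+1}=1$ corresponds to $s_j \neq s_{j+1}$, and the coupling $J_{jl}$ acts only between cyclically consecutive domain walls. *)

From HB Require Import structures.
From mathcomp Require Import all_boot all_order all_algebra.
From mathcomp Require Import reals.
Set Implicit Arguments. Unset Strict Implicit. Unset Printing Implicit Defensive.
Import Order.TTheory GRing.Theory Num.Theory.
Local Open Scope ring_scope.

Definition fmax (R : realDomainType) (I : finType) (i0 : I) (F : I -> R) : R :=
  \big[Num.max/F i0]_(i : I) F i.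
Definition fmin (R : realDomainType) (I : finType) (i0 : I) (F : I -> R) : R :=
  \big[Num.min/F i0]_(i : I) F i.

(* Sites are 'I_M, taken cyclically: the successor of j is ordS j (= j+1 mod M).
   Contact patterns are 'I_N (i.e. {1..N} shifted to {0..N-1}). *)

Definition H_potts (R : realDomainType) (N M : nat)
  (d : 'I_N -> 'I_M -> 'I_M -> R) (lambda : R) (s : {ffun 'I_M -> 'I_N}) : R :=
  - (\sum_(j : 'I_M) d (s j) j (ordS j))
  + lambda * (#|[set j : 'I_M | s j != s (ordS j)]|)%:R.

Definition Jcoup (R : realDomainType) (N M : nat) (i0 : 'I_N)
  (d : 'I_N -> 'I_M -> 'I_M -> R) (j l : 'I_M) : R :=
  fmax i0 (fun i => d i j l).

Definition walls (M : nat) (c : {ffun 'I_M -> bool}) : seq 'I_M :=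
  [seq j <- enum 'I_M | c j].

(* Ising (domain-wall) Hamiltonian: cyclically consecutive pairs
   (p_k, p_{k+1}) with p_{K+1} = p_1 are given by zip ps (rot 1 ps). *)
Definition H_ising (R : realDomainType) (N M : nat) (i0 : 'I_N)
  (d : 'I_N -> 'I_M -> 'I_M -> R) (lambda : R) (c : {ffun 'I_M -> bool}) : R :=
  let ps := walls c in
  - (\sum_(pq <- zip ps (rot 1 ps)) Jcoup i0 d pq.1 pq.2)
  + lambda * (\sum_(j : 'I_M) (c j : nat))%:R.

(* Additivity makes d_i a cocycle, so along a run of consecutive sites on which
   the pattern is constant, equal to i, the displacements d_{i j (j+1)} telescope
   to d_{i p q} between the ends of the run.  Hence if s changes only at the walls
   p_1 < ... < p_K of c, its displacement sum is sum_k d_{s(p_k) p_k p_(k+1)} <=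
   sum_k J_{p_k p_(k+1)}, with equality when s is constant on each run
   [p_k, p_(k+1)) with a value maximising d_{i p_k p_(k+1)}.  The domain walls of
   s are exactly its changes, which gives min H_c <= min H_s; conversely, the
   run-wise maximising pattern built from c has at most as many changes as c has
   walls, and lambda >= 0. *)

From HB Require Import structures.
From mathcomp Require Import all_boot all_order all_algebra.
From mathcomp Require Import reals.
From mathcomp Require Import zify.

Set Implicit Arguments.
Unset Strict Implicit.
Unset Printing Implicit Defensive.

Import Order.TTheory GRing.Theory Num.Theory.
Local Open Scope ring_scope.

Lemma fmax_arg_max (R : realDomainType) (I : finType) (i0 : I) (F : I -> R) :
  fmax i0 F = F [arg max_(i > i0) F i]%O.
Proof.
case: arg_maxP => // i _ max_i; apply/le_anti; rewrite le_bigmax andbT.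
by apply: bigmax_le => [|j _]; apply: max_i.
Qed.

Lemma fmin_eq_of_dominated (R : realDomainType) (I J : finType) (i0 : I) (j0 : J)
    (F : I -> R) (G : J -> R) :
  (forall i, exists j, G j <= F i) -> (forall j, exists i, F i <= G j) ->
  fmin i0 F = fmin j0 G.
Proof.
have fmin_le (K : finType) (k0 : K) (H : K -> R) x :
    (exists k, H k <= x) -> fmin k0 H <= x.
  by case=> k; apply: le_trans (bigmin_le _ _ _).
move=> GF FG; apply/le_anti/andP; split.
  by apply: le_bigmin => [|j _]; apply: fmin_le.
by apply: le_bigmin => [|i _]; apply: fmin_le.
Qed.

Lemma const_on_segment (T : Type) (S : nat -> T) x y :
  (forall a, (x <= a)%N -> (a.+1 < y)%N -> S a.+1 = S a) ->
  forall a, (x <= a < y)%N -> S a = S x.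
Proof.
move=> S_step; elim=> [|a IHa] /andP[le_xa lt_ay].
  by move: le_xa; rewrite leqn0 => /eqP->.
move: le_xa; rewrite leq_eqVlt => /predU1P[-> // | lt_xa].
by rewrite S_step // IHa // -ltnS lt_xa ltnW.
Qed.

Section Cocycle.

Variables (R : zmodType) (I : Type) (g : I -> nat -> nat -> R).
Hypothesis g_add : forall i a b c, g i a b + g i b c = g i a c.

Lemma cocycle_diag i a : g i a a = 0.
Proof. by apply: (addrI (g i a a)); rewrite g_add addr0. Qed.

Lemma telescope_cocycle (S : nat -> I) i x y : (x <= y)%N ->
  (forall a, (x <= a < y)%N -> S a = i) ->
  \sum_(x <= a < y) g (S a) a a.+1 = g i x y.
Proof.
move=> le_xy S_i.
rewrite (eq_big_nat _ _ (F2 := fun a => g i a a.+1)) => [|a /S_i -> //].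
elim: y le_xy {S_i} => [|y IHy].
  by rewrite leqn0 => /eqP->; rewrite big_geq ?cocycle_diag.
rewrite leq_eqVlt => /predU1P[-> | ]; first by rewrite big_geq ?cocycle_diag.
by rewrite ltnS => le_xy; rewrite big_nat_recr //= IHy.
Qed.

Lemma sum_cocycle_sorted (S : nat -> I) x ls : path ltn x ls ->
  (forall a, (x <= a)%N -> (a.+1 < last x ls)%N -> a.+1 \notin ls -> S a.+1 = S a) ->
  \sum_(x <= a < last x ls) g (S a) a a.+1
    = \sum_(ab <- zip (belast x ls) ls) g (S ab.1) ab.1 ab.2.
Proof.
elim: ls x => [|y ls IHls] x /=; first by rewrite big_geq ?big_nil.
case/andP => lt_xy path_y S_step.
have gt_y : all (ltn y) ls := order_path_min ltn_trans path_y.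
have le_y_last : (y <= last y ls)%N.
  by move: (mem_last y ls); rewrite inE => /predU1P[-> | /(allP gt_y)/ltnW].
rewrite big_cons /= (big_cat_nat (ltnW lt_xy) le_y_last) /=; congr (_ + _).
  apply: telescope_cocycle (ltnW lt_xy) _ => a; apply: const_on_segment => b le_xb lt_by.
  apply: S_step => //; first exact: leq_trans lt_by le_y_last.
  rewrite inE negb_or neq_ltn lt_by /=.
  by apply/negP => /(allP gt_y) /=; rewrite ltnNge (ltnW lt_by).
apply: IHls => // a le_ya lt_a_last a_notin; apply: S_step => //.
  exact: leq_trans (ltnW lt_xy) le_ya.
by rewrite inE negb_or a_notin andbT neq_ltn ltnS le_ya orbT.
Qed.

End Cocycle.

Lemma zip_map2 (T U : Type) (f : T -> U) (s t : seq T) :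
  zip (map f s) (map f t) = [seq (f ab.1, f ab.2) | ab <- zip s t].
Proof. by elim: s t => [|x s IHs] [|y t] //=; rewrite IHs. Qed.

Lemma map_next_rot1 (T : eqType) (s : seq T) : uniq s -> map (next s) s = rot 1 s.
Proof.
case: s => [//|x s] uniq_s; rewrite rot1_cons.
apply: (@eq_from_nth _ x) => [|i]; first by rewrite size_map size_rcons.
rewrite size_map => lt_i; rewrite (nth_map x) // next_nth mem_nth //.
by rewrite index_uniq // nth_rcons_default.
Qed.

Lemma sum_zip_rot1 (V : nmodType) (T : eqType) (s : seq T) (G : T -> T -> V) :
  uniq s -> \sum_(pq <- zip s (rot 1 s)) G pq.1 pq.2 = \sum_(p <- s) G p (next s p).
Proof. by move=> uniq_s; rewrite -map_next_rot1 // -{1}[s]map_id zip_map big_map. Qed.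

Section CyclicSites.

Variable n : nat.
Local Notation M := n.+1.
Implicit Types (c : {ffun 'I_M -> bool}) (j p q : 'I_M).

Lemma inZpS a : inZp a.+1 = ordS (inZp a : 'I_M).
Proof. by apply: val_inj; rewrite /= -addn1 -modnDml addn1. Qed.

Lemma inZpD a : inZp (a + M) = inZp a :> 'I_M.
Proof. by apply: val_inj; rewrite /= modnDr. Qed.

Lemma sum_ord_shift (V : nmodType) (F : 'I_M -> V) x :
  \sum_j F j = \sum_(x <= a < x + M) F (inZp a).
Proof.
elim: x => [|x ->].
  by rewrite add0n big_mkord; apply: eq_bigr => j _; rewrite valZpK.
have lt_x_xM : (x < x + M)%N by rewrite addnS ltnS leq_addr.
by rewrite big_ltn // addSn big_nat_recr //= inZpD addrC.
Qed.

Lemma mem_walls c p : (p \in walls c) = c p.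
Proof. by rewrite mem_filter mem_enum andbT. Qed.

Lemma walls_uniq c : uniq (walls c).
Proof. by rewrite filter_uniq ?enum_uniq. Qed.

Let ltn_val_trans : transitive (relpre (@nat_of_ord M) ltn).
Proof. by move=> q p r; apply: ltn_trans. Qed.

Lemma walls_sorted c : sorted (relpre val ltn) (walls c).
Proof.
apply: sorted_filter => //.
by rewrite -sorted_map val_enum_ord iota_ltn_sorted.
Qed.

Lemma walls_cons_min [c p ps q] : walls c = p :: ps -> c q -> (p <= q)%N.
Proof.
move=> wc; rewrite -mem_walls wc inE => /predU1P[-> // | q_ps].
have := walls_sorted c; rewrite wc /= => /(order_path_min ltn_val_trans).
by move=> /allP/(_ q q_ps)/ltnW.
Qed.

Lemma walls_unrolled [c p ps b] : walls c = p :: ps ->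
  (p < b < p + M)%N -> c (inZp b) -> b \in map val ps.
Proof.
move=> wc /andP[lt_pb lt_b_pM] cb.
have [lt_bM | le_Mb] := ltnP b M.
  have val_b : val (inZp b : 'I_M) = b by rewrite /= modn_small.
  move: cb; rewrite -mem_walls wc inE => /predU1P[eq_bp | b_ps].
    by move: lt_pb; rewrite -val_b eq_bp ltnn.
  by rewrite -val_b map_f.
have lt_pM := ltn_ord p; have := walls_cons_min wc cb.
by rewrite -(subnK le_Mb) inZpD /= modn_small; lia.
Qed.

(* Cyclically, the last wall at or before [j]: if no wall lies in [0, j], it is
   the last wall of the whole cycle (and [ord0] when there are no walls). *)
Definition last_wall_upto c j : 'I_M :=
  last (last ord0 (walls c)) [seq p : 'I_M <- walls c | (p <= j)%N].

Lemma last_wall_upto_wall c j : c j -> last_wall_upto c j = j.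
Proof.
move=> cj; rewrite /last_wall_upto.
have: all (fun p : 'I_M => p <= j)%N [seq p : 'I_M <- walls c | (p <= j)%N].
  by apply/allP => p; rewrite mem_filter => /andP[].
have: sorted (relpre val ltn) [seq p : 'I_M <- walls c | (p <= j)%N].
  exact: sorted_filter (walls_sorted c).
have: j \in [seq p : 'I_M <- walls c | (p <= j)%N].
  by rewrite mem_filter leqnn mem_walls.
case/splitPr => L1 L2; rewrite sorted_cat_cons all_cat /= => /andP[_].
case: L2 => [|q L2] /=; first by rewrite last_cat.
by case/andP => lt_jq _ /and4P[_ _]; rewrite leqNgt lt_jq.
Qed.

Lemma last_wall_upto_pred c j :
  ~~ c j -> last_wall_upto c j = last_wall_upto c (ord_pred j).
Proof.
move=> ncj; rewrite /last_wall_upto.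
have wall_neq p : p \in walls c -> p != j.
  by rewrite mem_walls; apply: contraTneq => ->.
have [j0 | j_gt0] := posnP j.
  have j_ord0 : j = ord0 by apply: val_inj.
  subst j.
  have -> : ord_pred ord0 = ord_max :> 'I_M by apply: val_inj; rewrite /= modn_small.
  rewrite (eq_in_filter (a2 := pred0)) ?filter_pred0; last first.
    by move=> p /wall_neq /negbTE; rewrite leqn0.
  rewrite (eq_in_filter (a2 := predT)) ?filter_predT; last by move=> p _; apply: leq_ord.
  by case: (walls c).
have val_pred : val (ord_pred j) = j.-1.
  have lt_jM := ltn_ord j.
  by rewrite /= -[in LHS](prednK j_gt0) addSn modnDr modn_small //; lia.
rewrite val_pred; congr last; apply: eq_in_filter => p /wall_neq.
by rewrite -val_eqE /= => neq_pj; apply/idP/idP; lia.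
Qed.

Lemma card_changes (I : eqType) (s : 'I_M -> I) :
  #|[set j | s j != s (ordS j)]| = (\sum_j (s (ord_pred j) != s j : nat))%N.
Proof.
rewrite -sum1dep_card big_mkcond /= (reindex_inj (@ord_pred_inj M)) /=.
by apply: eq_bigr => j _; rewrite ord_predK; case: ifP.
Qed.

End CyclicSites.

Section CyclicSum.

Variables (n : nat) (R : zmodType) (I : Type) (d : I -> 'I_n.+1 -> 'I_n.+1 -> R).
Local Notation M := n.+1.
Hypothesis d_add : forall i j l k, d i j l + d i l k = d i j k.

Let g i a b := d i (inZp a) (inZp b).

Let g_add i a b c : g i a b + g i b c = g i a c.
Proof. exact: d_add. Qed.

Lemma sum_steps_unrolled (s : 'I_M -> I) x :
  \sum_j d (s j) j (ordS j) = \sum_(x <= a < x + M) g (s (inZp a)) a a.+1.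
Proof. by rewrite (sum_ord_shift _ x); apply: eq_bigr => a _; rewrite /g inZpS. Qed.

Lemma sum_steps_walls (c : {ffun 'I_M -> bool}) (s : 'I_M -> I) :
  (forall j, ~~ c j -> s j = s (ord_pred j)) ->
  \sum_j d (s j) j (ordS j) = \sum_(p <- walls c) d (s p) p (next (walls c) p).
Proof.
move=> s_const.
have S_step a : ~~ c (inZp a.+1) -> s (inZp a.+1) = s (inZp a).
  by move/s_const; rewrite inZpS ordSK.
case wc: (walls c) => [|p ps].
  have no_wall a : ~~ c (inZp a) by rewrite -mem_walls wc.
  rewrite big_nil (sum_steps_unrolled _ 0) add0n.
  rewrite (telescope_cocycle g_add (i := s (inZp 0))) // /g.
    have inZpM : inZp M = inZp 0 :> 'I_M by apply: val_inj; rewrite /= modnn mod0n.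
    by rewrite inZpM; apply: (cocycle_diag g_add _ 0).
  by apply: const_on_segment => a _ _; apply/S_step/no_wall.
(* Unroll the cycle at the first wall p: the window [p, p + M) lists the sites
   in cyclic order, with the remaining walls at [map val ps] and p again at p + M. *)
pose ls := rcons (map val ps) (p + M)%N.
have path_ls : path ltn p ls.
  rewrite rcons_path last_map /= ltn_addl ?andbT //.
  by have := walls_sorted c; rewrite wc /= -path_map.
have S_step' a : (p <= a)%N -> (a.+1 < last (val p) ls)%N -> a.+1 \notin ls ->
    s (inZp a.+1) = s (inZp a).
  rewrite last_rcons => le_pa lt_a_pM a_notin; apply/S_step/negP => wall_a.
  have a_ps : a.+1 \in map val ps.
    by apply: (walls_unrolled wc _ wall_a); rewrite ltnS le_pa.
  by rewrite mem_rcons inE a_ps orbT in a_notin.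
rewrite (sum_steps_unrolled _ p) -(last_rcons (val p) (map val ps) (p + M)%N) -/ls.
rewrite (sum_cocycle_sorted g_add path_ls S_step') belast_rcons.
rewrite -(big_map (fun ab => (inZp ab.1, inZp ab.2)) xpredT
                  (fun pq => d (s pq.1) pq.1 pq.2)).
have inZp_val (qs : seq 'I_M) : map inZp (map val qs) = qs.
  by rewrite -map_comp (eq_map (@valZpK n)) map_id.
rewrite -zip_map2 -[_ :: map val ps]/(map val (p :: ps)) inZp_val.
rewrite map_rcons inZp_val inZpD valZpK.
by rewrite -rot1_cons -wc (sum_zip_rot1 (fun q r => d (s q) q r)) ?walls_uniq.
Qed.

End CyclicSum.

Section GroundStates.

Variables (R : realDomainType) (N n : nat) (i0 : 'I_N) (lambda : R).
Variable d : 'I_N -> 'I_n.+1 -> 'I_n.+1 -> R.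
Local Notation M := n.+1.
Hypothesis lambda_ge0 : 0 <= lambda.
Hypothesis d_add : forall i j l k, d i j l + d i l k = d i j k.

Lemma ising_coupling_sum (c : {ffun 'I_M -> bool}) :
  \sum_(pq <- zip (walls c) (rot 1 (walls c))) Jcoup i0 d pq.1 pq.2
  = \sum_(p <- walls c) Jcoup i0 d p (next (walls c) p).
Proof. exact/sum_zip_rot1/walls_uniq. Qed.

Definition domain_walls (s : {ffun 'I_M -> 'I_N}) : {ffun 'I_M -> bool} :=
  [ffun j => s (ord_pred j) != s j].

Lemma ising_domain_walls_le_potts s :
  H_ising i0 d lambda (domain_walls s) <= H_potts d lambda s.
Proof.
have s_const j : ~~ domain_walls s j -> s j = s (ord_pred j).
  by rewrite ffunE negbK => /eqP.
rewrite /H_ising /H_potts ising_coupling_sum (sum_steps_walls d_add s_const).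
have -> : (\sum_j (domain_walls s j : nat))%N = #|[set j | s j != s (ordS j)]|.
  by rewrite card_changes; apply: eq_bigr => j _; rewrite ffunE.
by rewrite lerD2r lerN2; apply: ler_sum => p _; apply: le_bigmax.
Qed.

Definition best_pattern (c : {ffun 'I_M -> bool}) (p : 'I_M) : 'I_N :=
  [arg max_(i > i0) d i p (next (walls c) p)]%O.

Definition potts_of_walls (c : {ffun 'I_M -> bool}) : {ffun 'I_M -> 'I_N} :=
  [ffun j => best_pattern c (last_wall_upto c j)].

Lemma potts_of_walls_le_ising c :
  H_potts d lambda (potts_of_walls c) <= H_ising i0 d lambda c.
Proof.
set s := potts_of_walls c.
have s_wall p : c p -> s p = best_pattern c p.
  by rewrite ffunE => /last_wall_upto_wall ->.
have s_const j : ~~ c j -> s j = s (ord_pred j).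
  by rewrite !ffunE => /last_wall_upto_pred ->.
rewrite /H_ising /H_potts ising_coupling_sum (sum_steps_walls d_add s_const).
have -> : \sum_(p <- walls c) d (s p) p (next (walls c) p)
          = \sum_(p <- walls c) Jcoup i0 d p (next (walls c) p).
  rewrite big_seq [RHS]big_seq; apply: eq_bigr => p; rewrite mem_walls => /s_wall ->.
  by rewrite /Jcoup fmax_arg_max.
rewrite lerD2l ler_wpM2l // ler_nat card_changes; apply: leq_sum => j _.
by case: (boolP (c j)) => [_ | /s_const <-]; rewrite ?leq_b1 ?eqxx.
Qed.

End GroundStates.

Theorem theorem1 (R : realType) (N M : nat) (hN : (0 < N)%N) (hM : (0 < M)%N)
  (lambda : R) (hlam : 0 <= lambda)
  (d : 'I_N -> 'I_M -> 'I_M -> R)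
  (hadd : forall (i : 'I_N) (j l k : 'I_M), d i j l + d i l k = d i j k) :
  fmin [ffun _ : 'I_M => Ordinal hN] (H_potts d lambda)
  = fmin [ffun _ : 'I_M => false] (H_ising (Ordinal hN) d lambda).
Proof.
case: M hM d hadd => // n _ d hadd.
apply: fmin_eq_of_dominated => [s | c].
  by exists (domain_walls s); apply: ising_domain_walls_le_potts.
by exists (potts_of_walls (Ordinal hN) d c); apply: potts_of_walls_le_ising.
Qed.
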